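(* Let $p\geq 2$ be an integer, and for integers $i\ge 0$ and $0\le r\le p-1$ set \[ \theta(i,r)=\frac{p i^2+(p+2r+2)i+2r+2}{(ip+r+1)(ip+p+r+1)(ip+r+2)(ip+p+r)} . \] Then \[ c_0\!\left(\frac{1}{p}\right)=\frac{p(p-1)(p-2)}{2\pi}\sum_{i\geq 0}\sum_{r=0}^{p-1}\theta(i,r). \]
   Context: For a positive integer $p$ and an integer $q$ with $1\le q\le p-1$ and $\gcd(p,q)=1$, the cotangent sum is $c_0\!\left(\frac{q}{p}\right)=-\sum_{k=1}^{p-1}\frac{k}{p}\cot\frac{\pi k q}{p}$. *)

From Stdlib Require Import Reals.
Open Scope R_scope.

Definition cot (x : R) : R := cos x / sin x.

Definition c0 (q p : nat) : R :=
  - sum_f 1 (p - 1) (fun k => (INR k / INR p) * cot (PI * INR k * INR q / INR p)).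

Definition theta (p i r : nat) : R :=
  let P := INR p in let I := INR i in let Rr := INR r in
  (P * I ^ 2 + (P + 2 * Rr + 2) * I + 2 * Rr + 2) /
  ((I * P + Rr + 1) * (I * P + P + Rr + 1) * (I * P + Rr + 2) * (I * P + P + Rr)).

Definition theta_row (p i : nat) : R := sum_f_R0 (fun r => theta p i r) (p - 1).

From Stdlib Require Import Reals Lra Lia.
From Coquelicot Require Import Coquelicot.
Open Scope R_scope.

(* The analytic input
   is the partial-fraction expansion, for 0 < x < 1,
       pi cot(pi x) = lim_I sum_(m<I) (1/(m+x) - 1/(m+1-x)),
   obtained by iterating the duplication formula cot t = (cot(t/2) + cot((t+pi)/2))/2
   K times and replacing each cot u by 1/u, at a cost of 3|.|/2^K per pair because
   cot u - 1/u is 3-Lipschitz on (0,2]; tails are controlled by telescoping.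
   The algebraic input is an exact telescoping identity for p >= 3: grouping the
   denominators in blocks of p consecutive integers,
       (P-1)(P-2) sum_(i<I) theta_row p i + (2/P) sum_(i<I) cot_block i = remainder I,
   where the cot_block i are the terms of the expansion of pi * sum_k (k/P) cot(pi k/P)
   and remainder I -> 0.  Letting I -> oo gives the theorem for p >= 3.  For p = 2
   both sides of the formula for c_0 vanish and the series converges by comparison
   with a telescoping series. *)

(* psum f n = f 0 + ... + f (n-1): sums over k < n are easier to split, shift and
   reverse than Stdlib's sum_f_R0, which has n+1 terms. *)
Fixpoint psum (f : nat -> R) (n : nat) : R :=
  match n with O => 0 | S n => psum f n + f n end.

Lemma sum_f_R0_psum f n : sum_f_R0 f n = psum f (S n).
Proof.
  induction n; [simpl; ring|].
  change (sum_f_R0 f (S n)) with (sum_f_R0 f n + f (S n)).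
  now rewrite IHn.
Qed.

Lemma psum_ext f g n : (forall k, (k < n)%nat -> f k = g k) -> psum f n = psum g n.
Proof.
  induction n; simpl; intros H; auto.
  rewrite IHn, H; auto; intros; apply H; lia.
Qed.

Lemma psum_plus f g n : psum (fun k => f k + g k) n = psum f n + psum g n.
Proof. induction n; simpl; [ring|rewrite IHn; ring]. Qed.

Lemma psum_minus f g n : psum (fun k => f k - g k) n = psum f n - psum g n.
Proof. induction n; simpl; [ring|rewrite IHn; ring]. Qed.

Lemma psum_opp f n : psum (fun k => - f k) n = - psum f n.
Proof. induction n; simpl; [ring|rewrite IHn; ring]. Qed.

Lemma psum_scal c f n : psum (fun k => c * f k) n = c * psum f n.
Proof. induction n; simpl; [ring|rewrite IHn; ring]. Qed.

Lemma psum_const c n : psum (fun _ => c) n = INR n * c.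
Proof. induction n; simpl psum; [simpl; ring|rewrite IHn, S_INR; ring]. Qed.

Lemma psum_gauss n : psum (fun k => INR k + 1) n = INR n * (INR n + 1) / 2.
Proof. induction n; simpl psum; [simpl; field|rewrite IHn, S_INR; field]. Qed.

Lemma psum_split f m n : psum f (m + n) = psum f m + psum (fun k => f (m + k)%nat) n.
Proof.
  induction n; simpl; [rewrite Nat.add_0_r; ring|].
  rewrite Nat.add_succ_r; simpl; rewrite IHn; ring.
Qed.

Lemma psum_shift f n : psum (fun k => f (S k)) n = psum f n - f O + f n.
Proof. induction n; simpl; [ring|rewrite IHn; ring]. Qed.

Lemma psum_peel g m : psum g (S m) = g O + psum (fun k => g (S k)) m.
Proof. induction m; simpl in *; [ring|rewrite IHm; ring]. Qed.

Lemma psum_rev f n : psum (fun k => f (n - S k)%nat) n = psum f n.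
Proof.
  induction n; [reflexivity|].
  rewrite psum_peel. replace (S n - 1)%nat with n by lia.
  transitivity (f n + psum (fun k => f (n - S k)%nat) n); [f_equal|].
  rewrite IHn. simpl. ring.
Qed.

Lemma psum_swap (F : nat -> nat -> R) M K :
  psum (fun m => psum (fun k => F m k) K) M = psum (fun k => psum (fun m => F m k) M) K.
Proof.
  induction M; simpl; [rewrite psum_const; ring|].
  now rewrite IHM, <- psum_plus.
Qed.

Lemma psum_le f g n : (forall k, (k < n)%nat -> f k <= g k) -> psum f n <= psum g n.
Proof.
  induction n; simpl; intros H; [lra|].
  assert (f n <= g n) by (apply H; lia).
  assert (psum f n <= psum g n) by (apply IHn; intros; apply H; lia).
  lra.
Qed.

Lemma psum_abs f n : Rabs (psum f n) <= psum (fun k => Rabs (f k)) n.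
Proof.
  induction n; simpl; [rewrite Rabs_R0; lra|].
  eapply Rle_trans; [apply Rabs_triang|lra].
Qed.

Lemma cv_const c : Un_cv (fun _ => c) c.
Proof.
  intros e He; exists O; intros; unfold R_dist.
  rewrite Rminus_diag, Rabs_R0; lra.
Qed.

Lemma cv_scal c u l : Un_cv u l -> Un_cv (fun n => c * u n) (c * l).
Proof. intros H. apply CV_mult; [apply cv_const|exact H]. Qed.

Lemma cv_inv_lin a b : 0 < a -> 0 < b -> Un_cv (fun n => / (a * INR n + b)) 0.
Proof.
  intros Ha Hb eps Heps.
  destruct (archimed_cor1 (eps * a)) as [N [HN HN0]]; [nra|].
  exists N. intros n Hn. unfold R_dist. rewrite Rminus_0_r.
  assert (HNr : 0 < INR N) by (apply lt_0_INR; lia).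
  assert (Hnr : INR N <= INR n) by (apply le_INR; lia).
  rewrite Rabs_right by (left; apply Rinv_0_lt_compat; nra).
  apply Rle_lt_trans with (/ (a * INR N)); [apply Rinv_le_contravar; nra|].
  rewrite Rinv_mult. apply Rmult_lt_reg_l with a; auto.
  replace (a * (/ a * / INR N)) with (/ INR N) by (field; lra). lra.
Qed.

Lemma psum_cv (g : nat -> nat -> R) (l : nat -> R) K :
  (forall k, (k < K)%nat -> Un_cv (fun n => g k n) (l k)) ->
  Un_cv (fun n => psum (fun k => g k n) K) (psum l K).
Proof.
  induction K; intros H; simpl; [apply cv_const|].
  apply CV_plus; [apply IHK; intros; apply H; lia|apply H; lia].
Qed.

Lemma pow2_ge n : (n <= 2^n)%nat.
Proof. induction n; simpl; [lia|]. pose proof (Nat.pow_nonzero 2 n). lia. Qed.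

Lemma cv_of_dyadic_estimate (u : nat -> R) L C : 0 <= C ->
  (forall K, Rabs (u (2^K)%nat - L) <= C / INR (2^K)) ->
  (forall m n, (1 <= m)%nat -> Rabs (u (m + n)%nat - u m) <= / INR m) ->
  Un_cv u L.
Proof.
  intros HC Hdy Htail eps Heps.
  destruct (archimed_cor1 (eps / (1 + C))) as [n0 [Hn0 Hn0p]].
  { apply Rdiv_lt_0_compat; lra. }
  exists (2 ^ n0)%nat. intros n Hn. unfold R_dist.
  pose proof (pow2_ge n0) as HIn0.
  set (I := (2^n0)%nat) in *.
  assert (HI : 0 < INR n0 <= INR I) by (split; [apply lt_0_INR|apply le_INR]; lia).
  assert (Hinv : / INR I <= / INR n0) by (apply Rinv_le_contravar; lra).
  replace n with (I + (n - I))%nat by lia.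
  replace (u (I + (n - I))%nat - L) with ((u (I + (n - I))%nat - u I) + (u I - L)) by ring.
  eapply Rle_lt_trans; [apply Rabs_triang|].
  assert (H1 : Rabs (u (I + (n - I))%nat - u I) <= / INR I) by (apply Htail; lia).
  assert (H2 : Rabs (u I - L) <= C * / INR I) by apply Hdy.
  assert (H3 : (1 + C) * / INR n0 < eps).
  { apply Rmult_lt_reg_l with (/ (1 + C)); [apply Rinv_0_lt_compat; lra|].
    replace (/ (1 + C) * ((1 + C) * / INR n0)) with (/ INR n0) by (field; lra).
    replace (/ (1 + C) * eps) with (eps / (1 + C)) by (unfold Rdiv; ring). lra. }
  assert (C * / INR I <= C * / INR n0) by (apply Rmult_le_compat_l; lra).
  assert ((1 + C) * / INR n0 = / INR n0 + C * / INR n0) by ring.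
  lra.
Qed.

Lemma PI_gt3 : 3 < PI.
Proof. pose proof PI2_3_2. lra. Qed.

Lemma cot_add_PI t : cot (t + PI) = cot t.
Proof. unfold cot. rewrite neg_cos, neg_sin. unfold Rdiv. rewrite Rinv_opp. ring. Qed.

Lemma cot_opp t : cot (- t) = - cot t.
Proof. unfold cot. rewrite cos_neg, sin_neg. unfold Rdiv. rewrite Rinv_opp. ring. Qed.

Lemma cot_duplication t : sin (t/2) <> 0 -> cos (t/2) <> 0 ->
  cot t = (cot (t/2) + cot ((t + PI)/2)) / 2.
Proof.
  intros Hs Hc. unfold cot.
  replace ((t + PI)/2) with (t/2 + PI/2) by field.
  rewrite sin_plus, cos_plus, sin_PI2, cos_PI2.
  replace t with (2 * (t/2)) at 1 2 by field.
  rewrite sin_2a, cos_2a. field. split; auto.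
Qed.

Lemma cot_multiplication K y : 0 < y < PI ->
  cot y = / INR (2^K) * psum (fun j => cot ((y + INR j * PI) / INR (2^K))) (2^K).
Proof.
  intros Hy. induction K.
  { simpl. replace ((y + 0 * PI) / 1) with y by field. field. }
  rewrite IHK at 1. set (M := INR (2^K)).
  assert (HM : 0 < M) by (unfold M; apply lt_0_INR, Nat.neq_0_lt_0, Nat.pow_nonzero; lia).
  assert (E : (2 ^ S K = 2^K + 2^K)%nat) by (simpl; lia).
  rewrite E, psum_split, plus_INR. fold M.
  set (g := fun j => cot ((y + INR j * PI) / (M + M))).
  change (psum (fun j => cot ((y + INR j * PI) / (M + M))) (2^K)) with (psum g (2^K)).
  change (psum (fun k => cot ((y + INR (2^K + k) * PI) / (M + M))) (2^K))
    with (psum (fun k => g (2^K + k)%nat) (2^K)).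
  rewrite <- psum_plus.
  rewrite (psum_ext _ (fun j => / 2 * (g j + g (2^K + j)%nat))).
  { rewrite psum_scal. field. lra. }
  intros j Hj.
  assert (Hj' : INR j + 1 <= M) by (rewrite <- S_INR; unfold M; apply le_INR; lia).
  assert (Hj0 : 0 <= INR j) by apply pos_INR.
  set (v := (y + INR j * PI) / M).
  assert (Hv : 0 < v / 2 < PI / 2).
  { unfold v. split.
    - apply Rmult_lt_0_compat; [|lra]. apply Rdiv_lt_0_compat; [|lra].
      pose proof PI_RGT_0. nra.
    - apply Rmult_lt_reg_r with (2 * M); [lra|].
      replace ((y + INR j * PI) / M / 2 * (2 * M)) with (y + INR j * PI) by (field; lra).
      replace (PI / 2 * (2 * M)) with (PI * M) by field. nra. }
  rewrite (cot_duplication v).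
  - assert (E1 : g j = cot (v / 2)) by (unfold g, v; f_equal; field; lra).
    assert (E2 : g (2^K + j)%nat = cot ((v + PI) / 2)).
    { unfold g, v. rewrite plus_INR. fold M. f_equal. field. lra. }
    rewrite E1, E2. field.
  - apply Rgt_not_eq, sin_gt_0; lra.
  - apply Rgt_not_eq, cos_gt_0; lra.
Qed.

(* Symmetric form of the multiplication formula: pairing the term j with
   2^(K+1) - 1 - j, all arguments lie in (0, pi/2]. *)
Lemma cot_multiplication_sym K y : 0 < y < PI ->
  cot y = / INR (2^(S K)) *
    (psum (fun m => cot ((y + INR m * PI) / INR (2^(S K)))) (2^K)
     - psum (fun m => cot (((INR m + 1) * PI - y) / INR (2^(S K)))) (2^K)).
Proof.
  intros Hy. rewrite (cot_multiplication (S K) y Hy) at 1.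
  set (N := INR (2^(S K))).
  assert (E : (2 ^ S K = 2^K + 2^K)%nat) by (simpl; lia).
  assert (HN : N = 2 * INR (2^K)) by (unfold N; rewrite E, plus_INR; ring).
  assert (HM : 0 < INR (2^K)) by (apply lt_0_INR, Nat.neq_0_lt_0, Nat.pow_nonzero; lia).
  rewrite E, psum_split. f_equal. unfold Rminus. f_equal.
  rewrite <- (psum_rev (fun k => cot ((y + INR (2 ^ K + k) * PI) / N))), <- psum_opp.
  apply psum_ext. intros m Hm.
  transitivity (cot ((- (((INR m + 1) * PI + - y) / N)) + PI)).
  { f_equal. rewrite plus_INR, minus_INR by lia. rewrite S_INR, HN. field. lra. }
  now rewrite cot_add_PI, cot_opp.
Qed.

Definition cot_reg (t : R) : R := cot t - / t.

Lemma sin_ge_cubic a : 0 <= a <= PI -> a - a^3/6 <= sin a.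
Proof.
  intros H. destruct (sin_bound a 0) as [H1 _]; try lra.
  replace (a - a^3/6) with (sin_approx a (2*0+1)); auto.
  unfold sin_approx, sin_term. simpl. field.
Qed.

Lemma cot_reg_derive c : 0 < c < PI ->
  derivable_pt_lim cot_reg c (/ c^2 - / (sin c)^2).
Proof.
  intros Hc. assert (Hs : 0 < sin c) by (apply sin_gt_0; lra).
  apply is_derive_Reals. unfold cot_reg, cot.
  auto_derive.
  - repeat split; lra.
  - pose proof (sin2_cos2 c) as E. unfold Rsqr in E. field_simplify; try lra.
    replace (cos c ^ 2) with (1 - sin c ^2) by (simpl; lra). field. lra.
Qed.

Lemma cot_reg_derive_bound c : 0 < c <= 2 -> Rabs (/ c^2 - / (sin c)^2) <= 3.
Proof.
  intros Hc. pose proof PI_gt3.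
  set (s := sin c).
  assert (Hs1 : s < c) by (apply sin_lt_x; lra).
  assert (Hs2 : c - c^3/6 <= s) by (apply sin_ge_cubic; lra).
  set (t := c - c^3/6) in *.
  assert (Ht : c/3 <= t) by (unfold t; nra).
  assert (Hst : t^2 <= s^2) by nra.
  assert (Hct : c^2 - t^2 <= c^4/3) by (unfold t; nra).
  assert (Ht2 : (c/3)^2 <= t^2) by nra.
  assert (Hct2 : c^4/3 <= 3 * c^2 * t^2).
  { replace (c^4/3) with (3 * c^2 * (c/3)^2) by field.
    apply Rmult_le_compat_l; [nra|exact Ht2]. }
  assert (H1 : / c^2 <= / s^2) by (apply Rinv_le_contravar; nra).
  assert (H2 : / s^2 - / c^2 <= 3).
  { replace (/ s^2 - / c^2) with ((c^2 - s^2) / (c^2 * s^2)) by (field; lra).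
    apply Rle_trans with (3 * (c^2*s^2) / (c^2 * s^2)).
    - apply Rmult_le_compat_r; [left; apply Rinv_0_lt_compat; nra|nra].
    - right; field; lra. }
  rewrite Rabs_left1; lra.
Qed.

Lemma cot_reg_lipschitz a b : 0 < a <= 2 -> 0 < b <= 2 ->
  Rabs (cot_reg a - cot_reg b) <= 3 * Rabs (a - b).
Proof.
  intros Ha Hb. pose proof PI_gt3.
  assert (ordered : forall u v, 0 < u <= 2 -> 0 < v <= 2 -> u < v ->
            Rabs (cot_reg v - cot_reg u) <= 3 * (v - u)).
  { intros u v Hu Hv Huv.
    destruct (MVT_cor2 cot_reg (fun c => / c^2 - / (sin c)^2) u v Huv) as [c [Ec Hc]].
    { intros c Hc. apply cot_reg_derive. lra. }
    rewrite Ec, Rabs_mult, (Rabs_right (v - u)) by lra.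
    apply Rmult_le_compat_r; [lra|apply cot_reg_derive_bound; lra]. }
  destruct (Rtotal_order a b) as [Hab|[Hab|Hab]].
  - rewrite Rabs_minus_sym, (Rabs_minus_sym a b), (Rabs_right (b - a)) by lra.
    apply ordered; lra.
  - subst. rewrite !Rminus_diag, Rabs_R0. lra.
  - rewrite (Rabs_right (a - b)) by lra. apply ordered; lra.
Qed.

(* Each symmetric pair in the multiplication formula differs from the pair of
   reciprocals by at most 3 pi / N, since both arguments lie in (0, pi/2]. *)
Lemma cot_reg_pair_bound y N m : 0 < y < PI -> 2 * (INR m + 1) <= N ->
  Rabs (cot_reg ((y + INR m * PI) / N) - cot_reg (((INR m + 1) * PI - y) / N))
  <= 3 * (PI / N).
Proof.
  intros Hy Hm. pose proof PI_gt3. pose proof PI_4. pose proof (pos_INR m).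
  assert (HN : 0 < N) by lra.
  assert (Hin : forall a, 0 < a <= (INR m + 1) * PI -> 0 < a / N <= 2).
  { intros a Ha. split; [apply Rdiv_lt_0_compat; lra|].
    apply Rmult_le_reg_r with N; [lra|].
    unfold Rdiv. rewrite Rmult_assoc, Rinv_l by lra. nra. }
  eapply Rle_trans; [apply cot_reg_lipschitz; apply Hin; nra|].
  apply Rmult_le_compat_l; [lra|].
  replace ((y + INR m * PI) / N - ((INR m + 1) * PI - y) / N) with ((2*y - PI)/N)
    by (field; lra).
  unfold Rdiv. rewrite Rabs_mult, (Rabs_right (/N)) by (left; apply Rinv_0_lt_compat; lra).
  apply Rmult_le_compat_r; [left; apply Rinv_0_lt_compat; lra|apply Rabs_le; lra].
Qed.

Lemma cot_dyadic_error K y : 0 < y < PI ->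
  Rabs (cot y - psum (fun m => / (y + INR m * PI) - / ((INR m + 1) * PI - y)) (2^K))
   <= 3 * PI / (4 * INR (2^K)).
Proof.
  intros Hy. rewrite (cot_multiplication_sym K y Hy).
  set (I := (2^K)%nat). set (N := INR (2^(S K))).
  assert (HN : N = 2 * INR I).
  { unfold N, I. replace (2 ^ S K)%nat with (2^K + 2^K)%nat by (simpl; lia).
    rewrite plus_INR; ring. }
  assert (HM : 0 < INR I) by (apply lt_0_INR, Nat.neq_0_lt_0, Nat.pow_nonzero; lia).
  pose proof PI_gt3.
  rewrite <- psum_minus, <- psum_scal, <- psum_minus.
  rewrite (psum_ext _ (fun m => / N * (cot_reg ((y + INR m * PI) / N)
                                      - cot_reg (((INR m + 1) * PI - y) / N)))).
  2:{ intros m Hm. pose proof (pos_INR m). unfold cot_reg. field. repeat split; nra. }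
  eapply Rle_trans; [apply psum_abs|].
  eapply Rle_trans; [apply (psum_le _ (fun _ => / N * (3 * (PI / N))))|].
  { intros m Hm.
    assert (Hm' : INR m + 1 <= INR I) by (rewrite <- S_INR; apply le_INR; lia).
    rewrite Rabs_mult, Rabs_right by (left; apply Rinv_0_lt_compat; lra).
    apply Rmult_le_compat_l; [left; apply Rinv_0_lt_compat; lra|].
    apply cot_reg_pair_bound; lra. }
  rewrite psum_const, HN. right. field. lra.
Qed.

Definition cot_pf (x : R) (I : nat) : R :=
  psum (fun m => / (INR m + x) - / (INR m + 1 - x)) I.

Lemma cot_pf_term_bound x m : 0 < x < 1 -> (1 <= m)%nat ->
  Rabs (/ (INR m + x) - / (INR m + 1 - x)) <= / INR m - / (INR m + 1).
Proof.
  intros Hx Hm. assert (H1 : 1 <= INR m) by (apply (le_INR 1); lia).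
  replace (/ (INR m + x) - / (INR m + 1 - x))
    with ((1 - 2*x) / ((INR m + x) * (INR m + 1 - x))) by (field; lra).
  replace (/ INR m - / (INR m + 1)) with (1 / (INR m * (INR m + 1))) by (field; lra).
  unfold Rdiv. rewrite Rabs_mult, (Rabs_right (/ _)) by (left; apply Rinv_0_lt_compat; nra).
  apply Rmult_le_compat; [apply Rabs_pos|left; apply Rinv_0_lt_compat; nra| |].
  - apply Rabs_le; lra.
  - apply Rinv_le_contravar; nra.
Qed.

(* The tail beyond I is dominated by the telescoping sum of 1/m - 1/(m+1). *)
Lemma cot_pf_tail x I n : 0 < x < 1 -> (1 <= I)%nat ->
  Rabs (cot_pf x (I + n) - cot_pf x I) <= / INR I.
Proof.
  intros Hx HI. unfold cot_pf. rewrite psum_split.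
  match goal with |- Rabs (?A + ?B - ?A) <= _ => replace (A + B - A) with B by ring end.
  eapply Rle_trans; [apply psum_abs|].
  eapply Rle_trans; [apply (psum_le _ (fun k => / INR (I + k) - / INR (I + S k)))|].
  { intros k Hk. rewrite (Nat.add_succ_r I k), S_INR. apply cot_pf_term_bound; auto. lia. }
  assert (telescope : forall n, psum (fun k => / INR (I + k) - / INR (I + S k)) n
                                = / INR I - / INR (I + n)).
  { induction n0; simpl psum; [rewrite Nat.add_0_r; ring|rewrite IHn0; ring]. }
  rewrite telescope. assert (0 < INR (I + n)) by (apply lt_0_INR; lia).
  assert (0 < / INR (I + n)) by (apply Rinv_0_lt_compat; lra). lra.
Qed.

Lemma cot_partial_fraction x : 0 < x < 1 -> Un_cv (cot_pf x) (PI * cot (PI * x)).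
Proof.
  intros Hx. pose proof PI_gt3.
  apply (cv_of_dyadic_estimate _ _ (PI * (3 * PI / 4))); [nra| |].
  - intros K. set (y := PI * x). assert (Hy : 0 < y < PI) by (unfold y; split; nra).
    assert (HK : 0 < INR (2^K)) by (apply lt_0_INR, Nat.neq_0_lt_0, Nat.pow_nonzero; lia).
    assert (E : cot_pf x (2^K) - PI * cot y = - PI *
      (cot y - psum (fun m => / (y + INR m * PI) - / ((INR m + 1) * PI - y)) (2^K))).
    { unfold cot_pf.
      rewrite (psum_ext (fun m => / (INR m + x) - / (INR m + 1 - x))
                 (fun m => PI * (/ (y + INR m * PI) - / ((INR m + 1) * PI - y)))).
      - rewrite psum_scal. ring.
      - intros m _. pose proof (pos_INR m). unfold y. field. repeat split; nra. }
    rewrite E, Rabs_mult, Rabs_Ropp, Rabs_right by lra.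
    replace (PI * (3 * PI / 4) / INR (2 ^ K)) with (PI * (3 * PI / (4 * INR (2^K))))
      by (field; lra).
    apply Rmult_le_compat_l; [lra|apply cot_dyadic_error; auto].
  - intros m n Hm. apply cot_pf_tail; auto.
Qed.

(* The block identity for p = p1 + 1 >= 3.  Every integer n >= 1 is written
   n = I p + s + 1 with s < p; the I-th block of denominators is I p + 1, ..., I p + p. *)
Section BlockIdentity.
Variable p1 : nat.
Hypothesis Hp1 : (2 <= p1)%nat.
Let p := S p1.
Let P := INR p.

Lemma P_ge3 : 3 <= P.
Proof. unfold P, p. replace 3 with (INR 3) by (simpl; ring). apply le_INR. lia. Qed.

Lemma INR_p1 : INR p1 = P - 1.
Proof. unfold P, p. rewrite S_INR. ring. Qed.

Definition block_inv (I s : nat) : R := / (INR I * P + INR s + 1).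
Definition block_harm (I : nat) : R := psum (block_inv I) p.

(* Term I of the expansion of pi * sum_(k<p1) ((k+1)/P) cot (pi (k+1)/P) obtained
   from cot_partial_fraction with x = (k+1)/P. *)
Definition cot_block (I : nat) : R :=
  psum (fun k => (INR k + 1) * (/ (INR I * P + INR k + 1) - / (INR I * P + P - INR k - 1))) p1.

Definition remainder (I : nat) : R :=
  (P - 1) / (P * (INR I * P + 1)) + 2 / (P * (INR I + 1))
  - 2 / P^2 * psum (fun t => (INR t + 1)^2 * block_inv I t) p.

Lemma block_denom_pos I s : 0 < INR I * P + INR s + 1.
Proof. pose proof P_ge3. pose proof (pos_INR I). pose proof (pos_INR s). nra. Qed.

Lemma block_inv_next I s : block_inv (S I) s = block_inv I (p + s).
Proof. unfold block_inv. f_equal. rewrite S_INR, plus_INR. fold P. ring. Qed.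

Lemma block_harm_last I : psum (block_inv I) p1 = block_harm I - block_inv I p1.
Proof. unfold block_harm, p. simpl. ring. Qed.

Lemma theta_partial_fractions I r :
  (P - 1) * (P - 2) * theta p I r =
  (P - 2) * (- (INR I * (INR I + 1)) * / (INR I * P + INR r + 1)
             + (INR I + 1) * (INR I + 2) * / (INR I * P + INR r + P + 1))
  + (INR I + 1) * (INR I * P + 2) * / (INR I * P + INR r + 2)
  + (INR I + 1) * (2 - 2 * P - INR I * P) * / (INR I * P + INR r + P).
Proof.
  pose proof P_ge3. pose proof (pos_INR I). pose proof (pos_INR r).
  unfold theta. fold P. field. repeat split; nra.
Qed.

Lemma block_sum_shifted I :
  psum (fun r => / (INR I * P + INR r + P)) p
  = block_harm (S I) + block_inv I p1 - block_inv I (p1 + p).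
Proof.
  transitivity (psum (fun r => block_inv I (p1 + r)) p).
  { apply psum_ext. intros k _. unfold block_inv. f_equal.
    rewrite plus_INR. unfold P, p. rewrite S_INR. ring. }
  assert (E1 := psum_split (block_inv I) p1 p).
  assert (E2 := psum_split (block_inv I) p p).
  assert (E3 : psum (block_inv I) (p + p) = psum (block_inv I) (p1 + p) + block_inv I (p1 + p)).
  { replace (p + p)%nat with (S (p1 + p)) by (unfold p; lia). reflexivity. }
  assert (E4 : psum (block_inv I) p = psum (block_inv I) p1 + block_inv I p1) by reflexivity.
  assert (E5 : psum (fun k => block_inv I (p + k)) p = block_harm (S I)).
  { unfold block_harm. apply psum_ext. intros k _. now rewrite block_inv_next. }
  unfold block_harm in *. lra.
Qed.

Lemma theta_row_harmonic I :
  (P - 1) * (P - 2) * theta_row p I =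
  (P - 2) * (- (INR I * (INR I + 1)) * block_harm I
             + (INR I + 1) * (INR I + 2) * block_harm (S I))
  + (INR I + 1) * (INR I * P + 2) * (block_harm I - block_inv I 0 + block_inv I p)
  + (INR I + 1) * (2 - 2 * P - INR I * P)
    * (block_harm (S I) + block_inv I p1 - block_inv I (p1 + p)).
Proof.
  unfold theta_row. replace (p - 1)%nat with p1 by (unfold p; lia).
  rewrite sum_f_R0_psum. fold p.
  rewrite <- psum_scal, (psum_ext _ _ _ (fun r _ => theta_partial_fractions I r)).
  rewrite !psum_plus, !psum_scal, block_sum_shifted.
  assert (S2 : psum (fun r => / (INR I * P + INR r + P + 1)) p = block_harm (S I)).
  { unfold block_harm. apply psum_ext. intros k _. rewrite block_inv_next. unfold block_inv.
    f_equal. rewrite plus_INR. fold P. ring. }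
  assert (S3 : psum (fun r => / (INR I * P + INR r + 2)) p
               = block_harm I - block_inv I 0 + block_inv I p).
  { unfold block_harm. rewrite <- psum_shift. apply psum_ext. intros k _.
    unfold block_inv. f_equal. rewrite S_INR. ring. }
  assert (S1 : psum (fun r => / (INR I * P + INR r + 1)) p = block_harm I) by reflexivity.
  rewrite S3, psum_plus, !psum_scal, S1, S2. reflexivity.
Qed.

(* cot_block I in terms of the harmonic sum of block I (reverse the second sum). *)
Lemma cot_block_harmonic I :
  cot_block I = 2 * (P - 1) - (2 * INR I * P + P) * (block_harm I - block_inv I p1).
Proof.
  pose proof P_ge3. pose proof (pos_INR I).
  unfold cot_block.
  rewrite (psum_ext _ (fun k => ((INR k + 1) * / (INR I * P + INR k + 1))
                               - ((INR k + 1) * / (INR I * P + P - INR k - 1)))) by (intros; ring).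
  rewrite psum_minus.
  assert (F1 : psum (fun k => (INR k + 1) * / (INR I * P + INR k + 1)) p1
               = INR p1 - INR I * P * psum (block_inv I) p1).
  { rewrite <- psum_scal, <- (Rmult_1_r (INR p1)), <- (psum_const 1 p1), <- psum_minus.
    apply psum_ext. intros k _. pose proof (block_denom_pos I k). unfold block_inv. field. lra. }
  assert (F2 : psum (fun k => (INR k + 1) * / (INR I * P + P - INR k - 1)) p1
               = (INR I * P + P) * psum (block_inv I) p1 - INR p1).
  { rewrite <- psum_rev, <- psum_scal, <- (Rmult_1_r (INR p1)), <- (psum_const 1 p1),
      <- psum_minus.
    apply psum_ext. intros k Hk. pose proof (block_denom_pos I k).
    rewrite minus_INR by lia. rewrite S_INR, INR_p1. unfold block_inv.
    replace (INR I * P + P - (P - 1 - (INR k + 1)) - 1) with (INR I * P + INR k + 1) by ring.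
    field. lra. }
  rewrite F1, F2, block_harm_last, INR_p1. ring.
Qed.

Lemma weighted_block_sum I :
  psum (fun t => (INR t + 1)^2 * block_inv I t) p
  = P * (P + 1) / 2 - INR I * P^2 + (INR I * P)^2 * block_harm I.
Proof.
  unfold block_harm.
  rewrite (psum_ext _ (fun t => (INR t + 1) - INR I * P + (INR I * P)^2 * block_inv I t)).
  - rewrite psum_plus, psum_minus, psum_gauss, psum_const, psum_scal. fold P. ring.
  - intros t _. pose proof (block_denom_pos I t). unfold block_inv. field. lra.
Qed.

Lemma block_telescoping I :
  (P - 1) * (P - 2) * theta_row p I + 2 / P * cot_block I = remainder (S I) - remainder I.
Proof.
  pose proof P_ge3. pose proof (pos_INR I).
  rewrite theta_row_harmonic, cot_block_harmonic. unfold remainder.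
  rewrite !weighted_block_sum.
  unfold block_inv. rewrite !S_INR, !plus_INR, INR_p1. fold P.
  change (INR 0) with 0. set (A := block_harm I). set (B := block_harm (S I)).
  clearbody P. field. repeat split; nra.
Qed.

Lemma remainder_0 : remainder 0 = 0.
Proof.
  pose proof P_ge3. unfold remainder. rewrite weighted_block_sum.
  change (INR 0) with 0. clearbody P. field. lra.
Qed.

Lemma partial_sums_identity I :
  (P - 1) * (P - 2) * psum (theta_row p) I + 2 / P * psum cot_block I = remainder I.
Proof.
  induction I; simpl psum; [rewrite remainder_0; ring|].
  transitivity (((P - 1) * (P - 2) * psum (theta_row p) I + 2 / P * psum cot_block I)
                + ((P - 1) * (P - 2) * theta_row p I + 2 / P * cot_block I)); [ring|].
  rewrite IHI, block_telescoping. ring.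
Qed.

(* Each term of remainder I is a multiple of 1/(a I + b). *)
Lemma remainder_cv : Un_cv remainder 0.
Proof.
  pose proof P_ge3.
  apply Un_cv_ext with (un := fun I => (P - 1) / P * / (P * INR I + 1)
        + 2 / P * / (1 * INR I + 1)
        - 2 / P^2 * psum (fun t => (INR t + 1)^2 * / (P * INR I + (INR t + 1))) p).
  { intros I. pose proof (pos_INR I). unfold remainder, block_inv. f_equal; [f_equal|].
    - field. split; nra.
    - field. split; nra.
    - f_equal. apply psum_ext. intros t _. f_equal. f_equal. ring. }
  replace 0 with ((P - 1) / P * 0 + 2 / P * 0 - 2 / P^2 * psum (fun t => (INR t + 1)^2 * 0) p).
  2:{ rewrite (psum_ext _ (fun _ => 0)) by (intros; ring). rewrite psum_const. ring. }
  apply CV_minus; [apply CV_plus|].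
  - apply cv_scal, cv_inv_lin; lra.
  - apply cv_scal, cv_inv_lin; lra.
  - apply cv_scal, psum_cv. intros t _. apply cv_scal, cv_inv_lin; [lra|].
    pose proof (pos_INR t). lra.
Qed.

End BlockIdentity.

(* For p = p1 + 1: sum_(k<p1) ((k+1)/p) cot (pi (k+1)/p), which is -c_0(1/p). *)
Definition cot_weighted_sum (p1 : nat) : R :=
  psum (fun k => (INR k + 1) / INR (S p1) * cot (PI * ((INR k + 1) / INR (S p1)))) p1.

Lemma c0_as_cot_weighted_sum p1 : (1 <= p1)%nat -> c0 1 (S p1) = - cot_weighted_sum p1.
Proof.
  intros Hp1. unfold c0, sum_f, cot_weighted_sum. replace (S p1 - 1)%nat with p1 by lia.
  rewrite sum_f_R0_psum. replace (S (p1 - 1)) with p1 by lia.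
  f_equal. apply psum_ext. intros k _.
  assert (0 < INR (S p1)) by apply lt_0_INR, Nat.lt_0_succ.
  rewrite plus_INR. change (INR 1) with 1. f_equal. f_equal. field. lra.
Qed.

Lemma cot_block_series p1 : (2 <= p1)%nat ->
  Un_cv (fun I => psum (cot_block p1) I) (PI * cot_weighted_sum p1).
Proof.
  intros Hp1. pose proof (P_ge3 p1 Hp1) as HP. set (P := INR (S p1)) in *.
  assert (HPp : P = INR p1 + 1) by apply S_INR.
  assert (Hx : forall k, (k < p1)%nat -> 0 < (INR k + 1) / P < 1).
  { intros k Hk. assert (INR k + 1 <= INR p1) by (rewrite <- S_INR; apply le_INR; lia).
    pose proof (pos_INR k). split; [apply Rdiv_lt_0_compat; lra|].
    apply Rmult_lt_reg_r with P; [lra|].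
    unfold Rdiv. rewrite Rmult_assoc, Rinv_l by lra. lra. }
  apply Un_cv_ext with
    (un := fun I => psum (fun k => (INR k + 1) / P * cot_pf ((INR k + 1) / P) I) p1).
  { intros I. unfold cot_block. rewrite psum_swap. apply psum_ext. intros k Hk.
    unfold cot_pf. rewrite <- psum_scal. apply psum_ext. intros m _.
    assert (INR k + 1 <= INR p1) by (rewrite <- S_INR; apply le_INR; lia).
    pose proof (pos_INR k). pose proof (pos_INR m). fold P.
    field. repeat split; nra. }
  unfold cot_weighted_sum. fold P. rewrite <- psum_scal.
  rewrite (psum_ext (fun k => PI * _)
             (fun k => (INR k + 1) / P * (PI * cot (PI * ((INR k + 1) / P))))) by (intros; ring).
  apply psum_cv. intros k Hk. apply cv_scal, cot_partial_fraction, Hx, Hk.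
Qed.

Lemma theta_series_ge3 p1 : (2 <= p1)%nat ->
  infinite_sum (theta_row (S p1))
    (- (2 / INR (S p1) * (PI * cot_weighted_sum p1))
     / ((INR (S p1) - 1) * (INR (S p1) - 2))).
Proof.
  intros Hp1. pose proof (P_ge3 p1 Hp1) as HP. set (P := INR (S p1)) in *.
  unfold infinite_sum.
  apply Un_cv_ext with (un := fun N => psum (theta_row (S p1)) (N + 1)).
  { intros N. rewrite sum_f_R0_psum. f_equal. lia. }
  apply (CV_shift' (fun N => psum (theta_row (S p1)) N)).
  apply Un_cv_ext with (un := fun I => (remainder p1 I - 2 / P * psum (cot_block p1) I)
                                     * / ((P - 1) * (P - 2))).
  { intros I. rewrite <- (partial_sums_identity p1 Hp1 I). fold P. field. split; lra. }
  unfold Rdiv. rewrite <- Rminus_0_l.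
  apply CV_mult; [apply CV_minus|apply cv_const].
  - exact (remainder_cv p1 Hp1).
  - apply cv_scal, cot_block_series, Hp1.
Qed.

Lemma proposition_ge3 p1 : (2 <= p1)%nat -> exists L : R,
    infinite_sum (fun i => theta_row (S p1) i) L /\
    c0 1 (S p1) = INR (S p1) * (INR (S p1) - 1) * (INR (S p1) - 2) / (2 * PI) * L.
Proof.
  intros Hp1. pose proof (P_ge3 p1 Hp1). pose proof PI_gt3.
  eexists. split; [apply theta_series_ge3, Hp1|].
  rewrite c0_as_cot_weighted_sum by lia. field. repeat split; lra.
Qed.

(* The case p = 2: the right-hand side vanishes, so only convergence is needed,
   which follows by comparison with a telescoping series. *)
Lemma theta_row2 i : theta_row 2 i =
  / (2 * (2 * INR i + 1) * (2 * INR i + 3)) + / (2 * (2 * INR i + 3)^2).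
Proof.
  pose proof (pos_INR i).
  unfold theta_row, theta. simpl sum_f_R0. replace (INR 2) with 2 by (simpl; ring).
  change (INR 0) with 0. change (INR 1) with 1. field. repeat split; nra.
Qed.

Definition telescope2 (i : nat) : R := / 2 * (/ (2 * INR i + 1) - / (2 * INR i + 3)).

Lemma theta_row2_bounds i : 0 <= theta_row 2 i <= telescope2 i.
Proof.
  pose proof (pos_INR i). rewrite theta_row2. unfold telescope2.
  assert (H1 : 0 < / (2 * (2 * INR i + 1) * (2 * INR i + 3))) by (apply Rinv_0_lt_compat; nra).
  assert (H2 : 0 < / (2 * (2 * INR i + 3)^2)) by (apply Rinv_0_lt_compat; nra).
  assert (H3 : / (2 * (2 * INR i + 3)^2) <= / (2 * (2 * INR i + 1) * (2 * INR i + 3)))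
    by (apply Rinv_le_contravar; nra).
  assert (H4 : / 2 * (/ (2 * INR i + 1) - / (2 * INR i + 3))
               = 2 * / (2 * (2 * INR i + 1) * (2 * INR i + 3))) by (field; nra).
  lra.
Qed.

Lemma telescope2_series : Un_cv (fun N => sum_f_R0 telescope2 N) (/ 2).
Proof.
  apply Un_cv_ext with (un := fun N => / 2 - / 2 * / (2 * INR N + 3)).
  { intros N. induction N; unfold telescope2 in *.
    - simpl. field.
    - change (sum_f_R0 ?f (S N)) with (sum_f_R0 f N + f (S N)).
      rewrite <- IHN, S_INR. pose proof (pos_INR N). field. nra. }
  assert (H := CV_minus _ _ _ _ (cv_const (/ 2))
                  (cv_scal (/ 2) _ _ (cv_inv_lin 2 3 Rlt_0_2 ltac:(lra)))).
  rewrite Rmult_0_r, Rminus_0_r in H. exact H.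
Qed.

Lemma proposition_2 : exists S : R,
    infinite_sum (fun i => theta_row 2 i) S /\
    c0 1 2 = INR 2 * (INR 2 - 1) * (INR 2 - 2) / (2 * PI) * S.
Proof.
  destruct (Rseries_CV_comp (theta_row 2) telescope2 theta_row2_bounds
              (exist _ _ telescope2_series)) as [S HS].
  exists S. split; [exact HS|].
  unfold c0, sum_f. simpl. unfold cot.
  replace (PI * 1 * 1 / (1 + 1)) with (PI / 2) by field.
  rewrite cos_PI2, sin_PI2. field. pose proof PI_RGT_0; lra.
Qed.

Theorem proposition2p2 (p : nat) (hp : (2 <= p)%nat) :
  exists S : R,
    infinite_sum (fun i => theta_row p i) S /\
    c0 1 p = INR p * (INR p - 1) * (INR p - 2) / (2 * PI) * S.
Proof.
  destruct p as [|p1]; [lia|].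
  destruct (Nat.eq_dec p1 1) as [->|Hne].
  - exact proposition_2.
  - apply proposition_ge3. lia.
Qed.
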